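(* Let $r\in\mathbb N$, $n\ge r$, and let $a_1,\dots,a_n\in[0,1]$ satisfy $\sum_{j=1}^na_j=1$ and $\sum_{j=1}^na_j^2\le(2^r r!)^{-1}$. Then, with $\epsilon:=(2\,r!)^{-1}$, $$\prod_{j=1}^n(1+a_jx^2)\ge\epsilon\,x^{2r}\qquad\text{for every }x>0 .$$ Consequently, for any $\lambda>0$, $q>0$, setting $\Psi(\rho):=\prod_{j=1}^n\big(\lambda^2/(\lambda^2+\rho^2a_j)\big)^q$, one has $$\int_x^{+\infty}\Psi^s(\rho)\rho^m\,d\rho\le\frac{1}{2rqs-m-1}\Big(\frac{\lambda^{2r}}{\epsilon}\Big)^{qs}x^{-2rqs+m+1}$$ for every $x>0$, $s>0$ and $m<2rqs-1$.
   Context: In the paper this is applied with $a_j=\pi_{j,\nu}^2$ (nonnegative numbers summing to one), on the event where $\nu>r$ and $\sum_j\pi_{j,\nu}^4<(2^rr!)^{-1}$. *)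

From Stdlib Require Import Reals Factorial.
Open Scope R_scope.

(* sum_upto f n = f 0 + ... + f (n-1)  (indices j = 1..n of the paper shifted to 0..n-1) *)
Fixpoint sum_upto (f : nat -> R) (n : nat) : R :=
  match n with O => 0 | S k => sum_upto f k + f k end.

Fixpoint prod_upto (f : nat -> R) (n : nat) : R :=
  match n with O => 1 | S k => prod_upto f k * f k end.

Definition improper_integral_eq (f : R -> R) (a l : R) : Prop :=
  (forall b, a <= b -> inhabited (Riemann_integrable f a b)) /\
  (forall eps, 0 < eps -> exists M, forall b (pr : Riemann_integrable f a b),
      a <= b -> M <= b -> Rabs (RiemannInt pr - l) < eps).

From Stdlib Require Import Reals Factorial Lra Lia Classical.
From Coquelicot Require Import Coquelicot.
Open Scope R_scope.

(* Expanding prod_j (1 + a_j y) and keeping one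
   group of terms gives prod_j (1 + a_j y) >= e_r(a) y^r for y >= 0, where e_r is
   the r-th elementary symmetric polynomial.  Two Newton-type inequalities,
     (k+1) e_(k+1) <= p1 e_k   and   (k+2) e_(k+2) >= p1 e_(k+1) - p2 e_k
   (p1 = sum a_j = 1, p2 = sum a_j^2), show that f_k = k! e_k is at most 1 and
   loses at most p2 k from step k to k+1; summing, f_r >= 1 - p2 (2^r r! - 1)/2,
   which is >= 1/2 under p2 <= 1/(2^r r!).  Hence e_r >= eps = 1/(2 r!).  Writing Psi(rho) as the (-q)-th power of the
   product of Part 1 at y = (rho/lam)^2 gives the pointwise majorant
     Psi(rho)^s rho^m <= (lam^(2r)/eps)^(qs) rho^(m - 2rqs),
   and a general comparison test with t^be, be < -1 (partial integrals of a
   nonnegative continuous function increase and are bounded, so they converge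
   to their supremum) yields the improper integral and its bound. *)

Section ElementarySymmetric.
Variable a : nat -> R.

(* esym k n is the elementary symmetric polynomial e_k(a 0, ..., a (n-1)),
   computed by e_k(a_0..a_n) = e_k(a_0..a_(n-1)) + a_n * e_(k-1)(a_0..a_(n-1)). *)
Fixpoint esym (k n : nat) : R :=
  match n with
  | O => match k with O => 1 | S _ => 0 end
  | S n' => esym k n' + match k with O => 0 | S k' => a n' * esym k' n' end
  end.

Lemma esym_0 n : esym 0 n = 1.
Proof. induction n as [|n IH]; simpl; lra. Qed.

Lemma esym_1 n : esym 1 n = sum_upto a n.
Proof. induction n as [|n IH]; simpl; [lra|]. rewrite esym_0, IH. lra. Qed.

Lemma esym_nonneg n : (forall j, (j < n)%nat -> 0 <= a j) -> forall k, 0 <= esym k n.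
Proof.
  induction n as [|n IH]; intros Ha k; simpl; [destruct k; lra|].
  assert (IHn := IH (fun j Hj => Ha j ltac:(lia))).
  assert (an : 0 <= a n) by (apply Ha; lia).
  destruct k as [|k]; [specialize (IHn 0%nat); lra|].
  pose proof (IHn (S k)); pose proof (IHn k); nra.
Qed.

(* Expanding the product keeps only nonnegative terms, among them e_k y^k. *)
Lemma esym_le_prod n : (forall j, (j < n)%nat -> 0 <= a j) ->
  forall k y, 0 <= y -> esym k n * y ^ k <= prod_upto (fun j => 1 + a j * y) n.
Proof.
  induction n as [|n IH]; intros Ha k y Hy; simpl; [destruct k; simpl; lra|].
  specialize (IH (fun j Hj => Ha j ltac:(lia))).
  assert (an : 0 <= a n) by (apply Ha; lia).
  assert (any : 0 <= a n * y) by nra.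
  pose proof (IH 0%nat y Hy) as P_ge_1; rewrite esym_0 in P_ge_1; simpl in P_ge_1.
  destruct k as [|k]; simpl in *; [rewrite esym_0; nra|].
  pose proof (IH (S k) y Hy) as Hk1; pose proof (IH k y Hy) as Hk; simpl in Hk1.
  assert (a n * y * (esym k n * y ^ k) <= a n * y * prod_upto (fun j => 1 + a j * y) n)
    by (apply Rmult_le_compat_l; lra).
  nra.
Qed.

Lemma esym_newton_upper n : (forall j, (j < n)%nat -> 0 <= a j) -> forall k,
  INR (S k) * esym (S k) n <= sum_upto a n * esym k n.
Proof.
  induction n as [|n IH]; intros Ha k; [simpl; destruct k; lra|].
  specialize (IH (fun j Hj => Ha j ltac:(lia))).
  assert (an : 0 <= a n) by (apply Ha; lia).
  pose proof (esym_nonneg n (fun j Hj => Ha j ltac:(lia))) as Hnn.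
  cbn [sum_upto esym].
  destruct k as [|k]; [rewrite !esym_0, esym_1; simpl; lra|].
  pose proof (IH (S k)); pose proof (IH k); pose proof (Hnn k).
  rewrite !S_INR in *. nra.
Qed.

Lemma esym_newton_lower n : (forall j, (j < n)%nat -> 0 <= a j) -> forall k,
  sum_upto a n * esym (S k) n - sum_upto (fun j => a j ^ 2) n * esym k n
  <= INR (S (S k)) * esym (S (S k)) n.
Proof.
  induction n as [|n IH]; intros Ha k; [simpl; destruct k; lra|].
  specialize (IH (fun j Hj => Ha j ltac:(lia))).
  assert (an : 0 <= a n) by (apply Ha; lia).
  pose proof (esym_nonneg n (fun j Hj => Ha j ltac:(lia))) as Hnn.
  cbn [sum_upto esym].
  destruct k as [|k].
  - pose proof (IH 0%nat) as H0. rewrite !esym_0, esym_1 in *. simpl in *. nra.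
  - pose proof (IH (S k)); pose proof (IH k); pose proof (Hnn k).
    assert (0 <= a n ^ 3 * esym k n) by (apply Rmult_le_pos; [apply pow_le|]; lra).
    rewrite !S_INR in *. simpl in *. nra.
Qed.

End ElementarySymmetric.

Lemma INR_fact_S k : INR (fact (S k)) = INR (S k) * INR (fact k).
Proof. rewrite fact_simpl. apply mult_INR. Qed.

Lemma sum_upto_nonneg (f : nat -> R) n :
  (forall j, (j < n)%nat -> 0 <= f j) -> 0 <= sum_upto f n.
Proof.
  induction n as [|n IH]; intros Hf; simpl; [lra|].
  pose proof (Hf n ltac:(lia)); pose proof (IH (fun j Hj => Hf j ltac:(lia))); lra.
Qed.

Lemma one_le_pow2_fact k : 1 <= 2 ^ k * INR (fact k).
Proof.
  pose proof (pow_R1_Rle 2 k ltac:(lra)).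
  pose proof (le_INR 1 (fact k) (lt_O_fact k)). simpl in *. nra.
Qed.

Section UnitMass.
Variables (a : nat -> R) (n : nat).
Hypothesis a_nonneg : forall j, (j < n)%nat -> 0 <= a j.
Hypothesis a_mass : sum_upto a n = 1.

(* f k = k! e_k(a).  When sum a = 1, Newton's inequalities say that f is
   nonincreasing from f 0 = 1 and drops by at most p2 * k at step k. *)
Definition scaled_esym (k : nat) : R := INR (fact k) * esym a k n.

Lemma scaled_esym_le_1 k : scaled_esym k <= 1.
Proof.
  unfold scaled_esym; induction k as [|k IH]; [simpl; rewrite esym_0; lra|].
  pose proof (esym_newton_upper a n a_nonneg k) as Hup; rewrite a_mass in Hup.
  pose proof (INR_fact_lt_0 k). rewrite INR_fact_S. nra.
Qed.

Let p2 := sum_upto (fun j => a j ^ 2) n.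

Let p2_nonneg : 0 <= p2.
Proof. apply sum_upto_nonneg; intros j _; apply pow2_ge_0. Qed.

Lemma scaled_esym_step k : scaled_esym k - p2 * INR k <= scaled_esym (S k).
Proof.
  unfold scaled_esym. destruct k as [|k].
  - simpl. rewrite esym_0, esym_1, a_mass. lra.
  - pose proof (esym_newton_lower a n a_nonneg k) as Hlow; rewrite a_mass in Hlow.
    pose proof (scaled_esym_le_1 k) as Hle1; unfold scaled_esym in Hle1.
    pose proof (INR_fact_lt_0 k); pose proof (pos_INR k); pose proof p2_nonneg.
    fold p2 in Hlow.
    set (c := INR (S k) * INR (fact k)).
    assert (Hc : 0 < c) by (unfold c; rewrite S_INR; nra).
    assert (c * (esym a (S k) n - p2 * esym a k n) <= c * (INR (S (S k)) * esym a (S (S k)) n))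
      by (apply Rmult_le_compat_l; lra).
    assert (p2 * INR (S k) * (INR (fact k) * esym a k n) <= p2 * INR (S k) * 1)
      by (apply Rmult_le_compat_l; [apply Rmult_le_pos, pos_INR|]; lra).
    rewrite (INR_fact_S (S k)), (INR_fact_S k). fold c. unfold c in *. nra.
Qed.

Lemma scaled_esym_lower k : 1 - p2 * (2 ^ k * INR (fact k) - 1) / 2 <= scaled_esym k.
Proof.
  induction k as [|k IH]; [unfold scaled_esym; simpl; rewrite esym_0; lra|].
  pose proof (scaled_esym_step k). pose proof p2_nonneg.
  pose proof (one_le_pow2_fact k) as HD. pose proof (pos_INR k).
  set (D := 2 ^ k * INR (fact k)) in *.
  replace (2 ^ S k * INR (fact (S k))) with (2 * (INR k + 1) * D)
    by (unfold D; rewrite INR_fact_S, S_INR; simpl; ring).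
  assert (p2 * (2 * INR k) <= p2 * ((2 * INR k + 1) * D)) by (apply Rmult_le_compat_l; nra).
  lra.
Qed.

End UnitMass.

Lemma esym_lower_bound (r n : nat) (a : nat -> R) :
  (forall j, (j < n)%nat -> 0 <= a j) ->
  sum_upto a n = 1 ->
  sum_upto (fun j => a j ^ 2) n <= / (2 ^ r * INR (fact r)) ->
  / (2 * INR (fact r)) <= esym a r n.
Proof.
  intros Ha Hmass Hsq.
  pose proof (scaled_esym_lower a n Ha Hmass r) as Hlow; unfold scaled_esym in Hlow.
  pose proof (one_le_pow2_fact r) as HD. pose proof (INR_fact_lt_0 r).
  pose proof (sum_upto_nonneg (fun j => a j ^ 2) n (fun j _ => pow2_ge_0 (a j))).
  assert (sum_upto (fun j => a j ^ 2) n * (2 ^ r * INR (fact r)) <= 1).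
  { rewrite <- (Rinv_l (2 ^ r * INR (fact r))) by lra. apply Rmult_le_compat_r; lra. }
  rewrite Rinv_mult. apply (Rmult_le_reg_l (INR (fact r))); [lra|].
  field_simplify; [nra|lra].
Qed.

Lemma prod_lower_bound (r n : nat) (a : nat -> R) :
  (forall j, (j < n)%nat -> 0 <= a j) ->
  sum_upto a n = 1 ->
  sum_upto (fun j => a j ^ 2) n <= / (2 ^ r * INR (fact r)) ->
  forall y, 0 <= y -> / (2 * INR (fact r)) * y ^ r <= prod_upto (fun j => 1 + a j * y) n.
Proof.
  intros Ha Hmass Hsq y Hy.
  pose proof (esym_lower_bound r n a Ha Hmass Hsq).
  pose proof (esym_le_prod a n Ha r y Hy). pose proof (pow_le y r Hy). nra.
Qed.
Lemma prod_upto_pos (f : nat -> R) n :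
  (forall j, (j < n)%nat -> 0 < f j) -> 0 < prod_upto f n.
Proof.
  induction n as [|n IH]; intros Hf; simpl; [lra|].
  apply Rmult_lt_0_compat; [apply IH; intros j Hj|]; apply Hf; lia.
Qed.

Lemma ex_derive_prod_upto (F : nat -> R -> R) n t :
  (forall j, (j < n)%nat -> ex_derive (F j) t) ->
  ex_derive (fun y => prod_upto (fun j => F j y) n) t.
Proof.
  induction n as [|n IH]; intros HF; simpl; [apply ex_derive_const|].
  apply ex_derive_mult; [apply IH; intros j Hj|]; apply HF; lia.
Qed.

Lemma is_RInt_Rpower (be x b : R) : 0 < x -> x <= b -> be + 1 <> 0 ->
  is_RInt (fun t => Rpower t be) x b
    (/ (be + 1) * (Rpower b (be + 1) - Rpower x (be + 1))).
Proof.
  intros Hx Hb Hbe.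
  set (F := fun t => / (be + 1) * Rpower t (be + 1)).
  replace (/ (be + 1) * (Rpower b (be + 1) - Rpower x (be + 1))) with (minus (F b) (F x))
    by (unfold F, minus, plus, opp; simpl; ring).
  apply (@is_RInt_derive R_CompleteNormedModule); intros t Ht;
    rewrite Rmin_left, Rmax_right in Ht by lra.
  - replace (Rpower t be) with (/ (be + 1) * ((be + 1) * Rpower t (be + 1 - 1)))
      by (replace (be + 1 - 1) with be by ring; field; exact Hbe).
    apply is_derive_scal, is_derive_Reals, derivable_pt_lim_power; lra.
  - apply (@ex_derive_continuous R_AbsRing); unfold Rpower; auto_derive; lra.
Qed.

Lemma ex_RInt_upper (g : R -> R) x b :
  (forall t, x <= t -> continuous g t) -> x <= b -> ex_RInt g x b.
Proof.
  intros Hc Hb. apply (@ex_RInt_continuous R_CompleteNormedModule).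
  intros t Ht; rewrite Rmin_left in Ht by lra; apply Hc; lra.
Qed.

Lemma RInt_nondecreasing_upper (g : R -> R) x b1 b2 :
  (forall t, x <= t -> continuous g t) -> (forall t, x <= t -> 0 <= g t) ->
  x <= b1 -> b1 <= b2 -> RInt g x b1 <= RInt g x b2.
Proof.
  intros Hc Hp H1 H2.
  assert (I1 : ex_RInt g x b1) by (apply ex_RInt_upper; auto).
  assert (I2 : ex_RInt g b1 b2) by (apply ex_RInt_upper; auto; intros; apply Hc; lra).
  rewrite <- (RInt_Chasles g x b1 b2 I1 I2).
  assert (0 <= RInt g b1 b2) by (apply RInt_ge_0; auto; intros; apply Hp; lra).
  change (plus (RInt g x b1) (RInt g b1 b2)) with (RInt g x b1 + RInt g b1 b2). lra.
Qed.

(* A nonnegative continuous g whose partial integrals over [x, b] stay below B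
   has an improper integral on [x, +oo): the supremum of the partial integrals. *)
Lemma improper_integral_of_bounded (g : R -> R) x B :
  (forall t, x <= t -> continuous g t) -> (forall t, x <= t -> 0 <= g t) ->
  (forall b, x <= b -> RInt g x b <= B) ->
  exists l, improper_integral_eq g x l /\ l <= B.
Proof.
  intros Hc Hp HB.
  set (partial := fun v => exists b, x <= b /\ v = RInt g x b).
  assert (Hbound : bound partial) by (exists B; intros v [b [Hb ->]]; auto).
  assert (Hne : exists v, partial v) by (exists (RInt g x x); exists x; split; auto; lra).
  destruct (completeness partial Hbound Hne) as [l [Hub Hlub]].
  exists l; split; [split|].
  - intros b Hb. constructor. apply ex_RInt_Reals_0, ex_RInt_upper; auto.
  - intros eps Heps.
    assert (Hclose : exists b0, x <= b0 /\ l - eps < RInt g x b0).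
    { apply NNPP; intro Hfar. assert (l <= l - eps) by
        (apply Hlub; intros v [b [Hb ->]]; apply Rnot_lt_le; intro; apply Hfar; eauto).
      lra. }
    destruct Hclose as [b0 [Hb0 Hgt]]. exists b0.
    intros b pr Hb Hbb. rewrite <- RInt_Reals.
    assert (RInt g x b <= l) by (apply Hub; exists b; auto).
    pose proof (RInt_nondecreasing_upper g x b0 b Hc Hp Hb0 Hbb).
    apply Rabs_def1; lra.
  - apply Hlub. intros v [b [Hb ->]]. auto.
Qed.

Lemma improper_integral_power_majorant (g : R -> R) x K be :
  0 < x -> be + 1 < 0 ->
  (forall t, x <= t -> continuous g t) ->
  (forall t, x <= t -> 0 <= g t <= K * Rpower t be) ->
  exists l, improper_integral_eq g x l /\ l <= / (- (be + 1)) * K * Rpower x (be + 1).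
Proof.
  intros Hx Hbe Hc Hg.
  apply improper_integral_of_bounded; [exact Hc|intros t Ht; apply Hg, Ht|].
  intros b Hb.
  assert (Hint : is_RInt (fun t => K * Rpower t be) x b
                   (K * (/ (be + 1) * (Rpower b (be + 1) - Rpower x (be + 1))))).
  { apply (is_RInt_scal (fun t => Rpower t be)), is_RInt_Rpower; lra. }
  apply Rle_trans with (RInt (fun t => K * Rpower t be) x b).
  - apply RInt_le; [lra|apply ex_RInt_upper; auto|eexists; exact Hint|].
    intros t Ht; apply Hg; lra.
  - rewrite (is_RInt_unique _ _ _ _ Hint).
    assert (HK : 0 <= K).
    { destruct (Hg x (Rle_refl x)) as [Hg0 HgK].
      pose proof (exp_pos (be * ln x)) as Hxbe; fold (Rpower x be) in Hxbe. nra. }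
    pose proof (exp_pos ((be + 1) * ln b)) as Hpos; fold (Rpower b (be + 1)) in Hpos.
    assert (0 < / - (be + 1)) by (apply Rinv_0_lt_compat; lra).
    assert (0 <= K * / - (be + 1) * Rpower b (be + 1))
      by (apply Rmult_le_pos; [apply Rmult_le_pos|]; lra).
    replace (/ (be + 1)) with (- / - (be + 1)) by (field; lra).
    lra.
Qed.

Lemma prod_upto_ext (f g : nat -> R) n :
  (forall j, (j < n)%nat -> f j = g j) -> prod_upto f n = prod_upto g n.
Proof.
  induction n as [|n IH]; intros Hfg; simpl; [reflexivity|].
  rewrite IH, (Hfg n); [reflexivity|lia|intros j Hj; apply Hfg; lia].
Qed.

Lemma prod_Rpower_inv (u : nat -> R) q n : (forall j, (j < n)%nat -> 0 < u j) ->
  prod_upto (fun j => Rpower (/ u j) q) n = Rpower (/ prod_upto u n) q.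
Proof.
  induction n as [|n IH]; intros Hu; simpl.
  - unfold Rpower. rewrite Rinv_1, ln_1, Rmult_0_r, exp_0. reflexivity.
  - assert (Hu' : forall j, (j < n)%nat -> 0 < u j) by (intros; apply Hu; lia).
    pose proof (Hu n ltac:(lia)). pose proof (prod_upto_pos u n Hu').
    rewrite IH, Rpower_mult_distr, Rinv_mult by (auto; apply Rinv_0_lt_compat; auto).
    reflexivity.
Qed.

(* lam^2 / (lam^2 + rho^2 a_j) = 1 / (1 + a_j (rho/lam)^2), so Psi is a negative
   power of the product bounded in prod_lower_bound, taken at y = (rho/lam)^2. *)
Lemma Psi_as_power (n : nat) (a : nat -> R) lam q rho :
  (forall j, (j < n)%nat -> 0 <= a j) -> 0 < lam ->
  prod_upto (fun j => Rpower (lam ^ 2 / (lam ^ 2 + rho ^ 2 * a j)) q) n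
  = Rpower (/ prod_upto (fun j => 1 + a j * (rho / lam) ^ 2) n) q.
Proof.
  intros Ha Hlam.
  assert (Hfac : forall j, (j < n)%nat -> 0 < 1 + a j * (rho / lam) ^ 2).
  { intros j Hj. pose proof (Ha j Hj). pose proof (pow2_ge_0 (rho / lam)). nra. }
  rewrite <- prod_Rpower_inv by exact Hfac.
  apply prod_upto_ext. intros j Hj. f_equal.
  pose proof (Ha j Hj). pose proof (pow2_ge_0 rho). pose proof (pow_lt lam 2 Hlam).
  field. split; [lra|nra].
Qed.

Lemma inv_pow_ratio (r : nat) lam rho c : 0 < lam -> 0 < rho -> 0 < c ->
  / (c * ((rho / lam) ^ 2) ^ r) = lam ^ (2 * r) / c * Rpower rho (- (2 * INR r)).
Proof.
  intros Hlam Hrho Hc.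
  replace (2 * INR r) with (INR (2 * r)) by (rewrite mult_INR; reflexivity).
  rewrite Rpower_Ropp, Rpower_pow, <- pow_mult by exact Hrho.
  unfold Rdiv. rewrite Rpow_mult_distr, pow_inv.
  pose proof (pow_lt rho (2 * r) Hrho). pose proof (pow_lt lam (2 * r) Hlam).
  field. lra.
Qed.

Lemma integrand_bound (r n : nat) (a : nat -> R) lam q s m rho :
  (forall j, (j < n)%nat -> 0 <= a j) ->
  sum_upto a n = 1 ->
  sum_upto (fun j => a j ^ 2) n <= / (2 ^ r * INR (fact r)) ->
  0 < lam -> 0 < q -> 0 < s -> 0 < rho ->
  Rpower (prod_upto (fun j => Rpower (lam ^ 2 / (lam ^ 2 + rho ^ 2 * a j)) q) n) s
    * Rpower rho m
  <= Rpower (lam ^ (2 * r) / / (2 * INR (fact r))) (q * s)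
     * Rpower rho (- (2 * INR r * q * s) + m).
Proof.
  intros Ha Hmass Hsq Hlam Hq Hs Hrho.
  set (eps := / (2 * INR (fact r))).
  assert (Heps : 0 < eps) by (apply Rinv_0_lt_compat; pose proof (INR_fact_lt_0 r); lra).
  assert (Ht : 0 < rho / lam) by (apply Rdiv_lt_0_compat; auto).
  rewrite (Psi_as_power n a lam q rho Ha Hlam), Rpower_mult.
  set (P := prod_upto (fun j => 1 + a j * (rho / lam) ^ 2) n).
  assert (HP : eps * ((rho / lam) ^ 2) ^ r <= P)
    by (apply prod_lower_bound; auto; apply pow2_ge_0).
  assert (Hlow : 0 < eps * ((rho / lam) ^ 2) ^ r)
    by (apply Rmult_lt_0_compat; [|apply pow_lt, pow_lt]; auto).
  apply Rle_trans with (Rpower (/ (eps * ((rho / lam) ^ 2) ^ r)) (q * s) * Rpower rho m).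
  - apply Rmult_le_compat_r; [apply Rlt_le, exp_pos|].
    apply Rle_Rpower_l; [nra|split; [apply Rinv_0_lt_compat|apply Rinv_le_contravar]; lra].
  - assert (0 < lam ^ (2 * r) / eps) by (apply Rdiv_lt_0_compat; [apply pow_lt|]; auto).
    rewrite inv_pow_ratio, <- Rpower_mult_distr by (auto; apply exp_pos).
    rewrite Rpower_mult, Rmult_assoc, <- Rpower_plus.
    right. f_equal. f_equal. ring.
Qed.

Lemma Psi_derivable (n : nat) (a : nat -> R) lam q t :
  (forall j, (j < n)%nat -> 0 <= a j) -> 0 < lam ->
  ex_derive (fun rho => prod_upto (fun j => Rpower (lam ^ 2 / (lam ^ 2 + rho ^ 2 * a j)) q) n) t.
Proof.
  intros Ha Hlam. apply ex_derive_prod_upto. intros j Hj.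
  assert (Hden : 0 < lam ^ 2 + t ^ 2 * a j)
    by (pose proof (Ha j Hj); pose proof (pow2_ge_0 t); pose proof (pow_lt lam 2 Hlam); nra).
  unfold Rpower. auto_derive. simpl in Hden.
  split; [lra|split; [apply Rdiv_lt_0_compat; nra|exact I]].
Qed.

Theorem proposition2p6 (r n : nat) (a : nat -> R) :
  (r <= n)%nat ->
  (forall j, (j < n)%nat -> 0 <= a j <= 1) ->
  sum_upto a n = 1 ->
  sum_upto (fun j => a j ^ 2) n <= / (2 ^ r * INR (fact r)) ->
  let eps := / (2 * INR (fact r)) in
  (forall x, 0 < x -> prod_upto (fun j => 1 + a j * x ^ 2) n >= eps * x ^ (2 * r))
  /\
  (forall lam q, 0 < lam -> 0 < q ->
     let Psi := fun rho : R =>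
       prod_upto (fun j => Rpower (lam ^ 2 / (lam ^ 2 + rho ^ 2 * a j)) q) n in
     forall x s m, 0 < x -> 0 < s -> m < 2 * INR r * q * s - 1 ->
       exists l,
         improper_integral_eq (fun rho => Rpower (Psi rho) s * Rpower rho m) x l /\
         l <= / (2 * INR r * q * s - m - 1)
              * Rpower (lam ^ (2 * r) / eps) (q * s)
              * Rpower x (- (2 * INR r * q * s) + m + 1)).
Proof.
  intros _ Ha Hmass Hsq eps.
  assert (Ha0 : forall j, (j < n)%nat -> 0 <= a j) by (intros j Hj; apply Ha, Hj).
  split.
  - intros x Hx. rewrite pow_mult. apply Rle_ge, prod_lower_bound; auto. apply pow2_ge_0.
  - intros lam q Hlam Hq Psi x s m Hx Hs Hm.
    set (be := - (2 * INR r * q * s) + m).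
    destruct (improper_integral_power_majorant (fun rho => Rpower (Psi rho) s * Rpower rho m)
                x (Rpower (lam ^ (2 * r) / eps) (q * s)) be) as [l [Hl Hle]].
    + exact Hx.
    + unfold be; lra.
    + intros t Ht. apply (@ex_derive_continuous R_AbsRing). unfold Rpower. auto_derive.
      split; [apply Psi_derivable; auto|].
      split; [apply prod_upto_pos; intros; apply exp_pos|split; [lra|exact I]].
    + intros t Ht. split.
      * apply Rlt_le, Rmult_lt_0_compat; apply exp_pos.
      * apply integrand_bound; auto; lra.
    + exists l. split; [exact Hl|].
      unfold be in Hle. replace (- (- (2 * INR r * q * s) + m + 1))
        with (2 * INR r * q * s - m - 1) in Hle by ring.
      exact Hle.
Qed.
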